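(* Let $\mathfrak{n}$ be the real 3-dimensional Heisenberg Lie algebra with basis $(x_1,x_2,x_3)$ and only nonzero bracket $[x_1,x_2]=x_3$. (i) Any linear map $J:\mathfrak{n}\to\mathfrak{n}$ which has zero torsion and is an extension of a rank 1 CR-structure $(\mathfrak{p},J_\mathfrak{p})$ on $\mathfrak{n}$ with $\mathfrak{p}$ nonabelian is equivalent to a unique endomorphism with matrix (in the basis $(x_1,x_2,x_3)$) $\begin{pmatrix}0&-1&0\\1&0&0\\0&0&c\end{pmatrix}$, $c\in\mathbb{R}$. (ii) Any linear map $J:\mathfrak{n}\to\mathfrak{n}$ which is an extension of a rank 1 CR-structure $(\mathfrak{p},J_\mathfrak{p})$ on $\mathfrak{n}$ with $\mathfrak{p}$ abelian is equivalent to a unique endomorphism with matrix (in the basis $(x_1,x_2,x_3)$) $\begin{pmatrix}t&0&0\\0&0&1\\0&-1&0\end{pmatrix}$, $t\in\mathbb{R}$; and such a $J$ has nonzero torsion.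
   Context: A rank 1 CR-structure on a real Lie algebra $\mathfrak{g}$ is a pair $(\mathfrak{p},J_\mathfrak{p})$ where $\mathfrak{p}$ is a 2-dimensional vector subspace of $\mathfrak{g}$ and $J_\mathfrak{p}:\mathfrak{p}\to\mathfrak{p}$ is linear with (a) $J_\mathfrak{p}^2=-1$, (b) $[X,Y]-[J_\mathfrak{p}X,J_\mathfrak{p}Y]\in\mathfrak{p}$ for all $X,Y\in\mathfrak{p}$, (c) $[J_\mathfrak{p}X,J_\mathfrak{p}Y]-[X,Y]-J_\mathfrak{p}[J_\mathfrak{p}X,Y]-J_\mathfrak{p}[X,J_\mathfrak{p}Y]=0$ for all $X,Y\in\mathfrak{p}$. A linear map $J:\mathfrak{g}\to\mathfrak{g}$ is an extension of it if $J|_\mathfrak{p}=J_\mathfrak{p}$. $\mathfrak{p}$ is abelian if $[X,Y]=0$ for all $X,Y\in\mathfrak{p}$. A linear map $J$ has zero torsion if $[JX,JY]-[X,Y]-J[JX,Y]-J[X,JY]=0$ for all $X,Y\in\mathfrak{g}$. Two linear maps $J,J'$ are equivalent if $J'=\Phi\circ J\circ\Phi^{-1}$ for some Lie algebra automorphism $\Phi$. The matrix of a linear map in a basis $(e_j)$ is $(\xi^i_j)$ with $Je_j=\sum_i\xi^i_je_i$. *)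

(* The real Heisenberg algebra n = R^3 (column vectors),
   basis x1 = e_0, x2 = e_1, x3 = e_2, bracket [x1,x2] = x3. *)
From HB Require Import structures.
From mathcomp Require Import all_boot all_order all_algebra.
From mathcomp Require Import reals.
Set Implicit Arguments. Unset Strict Implicit. Unset Printing Implicit Defensive.
Import Order.TTheory GRing.Theory Num.Theory.
Local Open Scope ring_scope.

Section Heis.
Variable R : realType.

Definition vec := 'cV[R]_3.

Definition i0 : 'I_3 := @Ordinal 3 0 isT.
Definition i1 : 'I_3 := @Ordinal 3 1 isT.
Definition i2 : 'I_3 := @Ordinal 3 2 isT.

Definition x3 : vec := delta_mx i2 0.

Definition hbr (u v : vec) : vec :=
  (u i0 0 * v i1 0 - u i1 0 * v i0 0) *: x3.

(* A linear map J : n -> n is given by its matrix (xi^i_j), J e_j = sum_i xi^i_j e_i,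
   acting on column vectors by J *m v. *)

(* J is an extension of a rank 1 CR-structure (p, J_p) with J_p = J|_p :
   p is a 2-dimensional subspace, J maps p into p (so J_p := J|_p : p -> p
   is linear), and conditions (a), (b), (c) hold. *)
Definition ext_CR (J : 'M[R]_3) (p : {vspace vec}) : Prop :=
  [/\ \dim p = 2%N,
      (forall X, X \in p -> J *m X \in p),
      (forall X, X \in p -> J *m (J *m X) = - X),
      (forall X Y, X \in p -> Y \in p -> hbr X Y - hbr (J *m X) (J *m Y) \in p)
    & (forall X Y, X \in p -> Y \in p ->
        hbr (J *m X) (J *m Y) - hbr X Y - J *m hbr (J *m X) Y
          - J *m hbr X (J *m Y) = 0)].

Definition abelian_sub (p : {vspace vec}) : Prop :=
  forall X Y, X \in p -> Y \in p -> hbr X Y = 0.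

Definition zero_torsion (J : 'M[R]_3) : Prop :=
  forall X Y : vec, hbr (J *m X) (J *m Y) - hbr X Y - J *m hbr (J *m X) Y
                    - J *m hbr X (J *m Y) = 0.

Definition lie_aut (Phi : 'M[R]_3) : Prop :=
  Phi \in unitmx /\ forall X Y : vec, Phi *m hbr X Y = hbr (Phi *m X) (Phi *m Y).

Definition equiv_map (J J' : 'M[R]_3) : Prop :=
  exists Phi, lie_aut Phi /\ J' = Phi *m J *m invmx Phi.

Definition Mc (c : R) : 'M[R]_3 :=
  \matrix_(i < 3, j < 3)
    (if (i == i0) && (j == i1) then -1
     else if (i == i1) && (j == i0) then 1
     else if (i == i2) && (j == i2) then c else 0).

Definition Mt (t : R) : 'M[R]_3 :=
  \matrix_(i < 3, j < 3)
    (if (i == i0) && (j == i0) then t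
     else if (i == i1) && (j == i2) then 1
     else if (i == i2) && (j == i1) then -1 else 0).

End Heis.

(* Write [u, v] = omega(u, v) x3.  Since J_p^2 = -1, J has no real eigenvector in p,
   so if omega vanishes on (X, JX) for some nonzero X in p, a nonzero combination of
   X and JX is a multiple of x3, i.e. x3 lies in p; this happens in particular when p
   is abelian.  Zero torsion forces J x3 to be a multiple of x3, which is impossible
   for x3 in p.  Hence under zero torsion omega(X, JX) <> 0, and in the frame
   (X, JX, omega(X, JX) x3), which is an automorphism of n, J has the matrix Mc c,
   c the x3-coordinate of J x3.  In the abelian case p = span(x3, V) with V = J x3,
   J acts on n/p by a scalar t, and correcting a lift e of n/p by an element of p
   makes J e = t e; in the frame (e, V, x3), normalised by omega(e, V) = 1, J has
   the matrix Mt t.  Equivalence preserves the trace, and tr (Mc c) = c,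
   tr (Mt t) = t, which gives uniqueness; finally abelian p contains x3, so J cannot
   have zero torsion. *)

From HB Require Import structures.
From mathcomp Require Import all_boot all_order all_algebra.
From mathcomp Require Import reals.
From mathcomp Require Import ring lra.
Import Order.TTheory GRing.Theory Num.Theory.
Set Implicit Arguments.
Unset Strict Implicit.
Unset Printing Implicit Defensive.
Local Open Scope ring_scope.

Section ComplexStructure.
Variables (R : realFieldType) (n : nat) (J : 'M[R]_n).

Lemma cplx_indep (X : 'cV[R]_n) (a b : R) :
  J *m (J *m X) = - X -> X != 0 -> a *: X + b *: (J *m X) = 0 -> a = 0 /\ b = 0.
Proof.
move=> JJX X0 abX.
have baX : a *: (J *m X) + b *: - X = 0.
  by have := congr1 (mulmx J) abX; rewrite mulmxDr -!scalemxAr JJX mulmx0.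
have : (a ^+ 2 + b ^+ 2) *: X = a *: (a *: X + b *: (J *m X)) - b *: (a *: (J *m X) + b *: - X).
  by apply/matrixP=> i j; rewrite !mxE; ring.
rewrite abX baX !scaler0 subrr.
move/eqP; rewrite scaler_eq0 (negbTE X0) orbF => /eqP s0.
by split; nra.
Qed.

Lemma no_real_eigenvector (X : 'cV[R]_n) (c : R) :
  J *m (J *m X) = - X -> J *m X = c *: X -> X = 0.
Proof.
move=> JJX JX; apply/eqP; apply: contraT => X0.
have [|_] := @cplx_indep X c (-1) JJX X0.
  by rewrite JX scaleN1r subrr.
by move/eqP; rewrite oppr_eq0 oner_eq0.
Qed.

Lemma rotation_shift_eigen (u y z : 'cV[R]_n) (t b c : R) :
  J *m y = - z -> J *m z = y -> J *m u = t *: u + b *: y + c *: z ->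
  exists k1 k2, J *m (u + k1 *: y + k2 *: z) = t *: (u + k1 *: y + k2 *: z).
Proof.
(* Solve (J - t)(k1 y + k2 z) = - (b y + c z); J - t is invertible on span(y, z). *)
move=> Jy Jz Ju; have t2 : 1 + t ^+ 2 != 0 by rewrite paddr_eq0 ?sqr_ge0 ?oner_eq0.
exists ((c + t * b) / (1 + t ^+ 2)), ((t * c - b) / (1 + t ^+ 2)).
rewrite !mulmxDr -!scalemxAr Ju Jy Jz; apply/matrixP => i j; rewrite !mxE.
by field.
Qed.

End ComplexStructure.

Section Heisenberg.
Variable R : realType.
Local Notation vec := (vec R).
Local Notation x3 := (x3 R).

Definition omega (u v : vec) : R := u i0 0 * v i1 0 - u i1 0 * v i0 0.

Definition vec3 (a b c : R) : vec :=
  \col_i (if i == i0 then a else if i == i1 then b else c).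

Definition cols3 (u v w : vec) : 'M[R]_3 :=
  \matrix_(i, j) (if j == i0 then u i 0 else if j == i1 then v i 0 else w i 0).

Definition heis_frame (u v : vec) : 'M[R]_3 := cols3 u v (omega u v *: x3).

Lemma ord3P (i : 'I_3) : [\/ i = i0, i = i1 | i = i2].
Proof.
case: i => [[|[|[|k]]] Hk]; [constructor 1|constructor 2|constructor 3|by []];
  exact: val_inj.
Qed.

Lemma vec3P (u v : vec) :
  u i0 0 = v i0 0 -> u i1 0 = v i1 0 -> u i2 0 = v i2 0 -> u = v.
Proof.
by move=> h0 h1 h2; apply/matrixP => i j; rewrite (ord1 j); case: (ord3P i) => ->.
Qed.

Lemma mx3P (A B : 'M[R]_3) :
  (forall i, A i i0 = B i i0) -> (forall i, A i i1 = B i i1) ->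
  (forall i, A i i2 = B i i2) -> A = B.
Proof. by move=> h0 h1 h2; apply/matrixP => i j; case: (ord3P j) => ->. Qed.

Lemma mulmx3E m n (A : 'M[R]_(m, 3)) (B : 'M[R]_(3, n)) i j :
  (A *m B) i j = A i i0 * B i0 j + A i i1 * B i1 j + A i i2 * B i2 j.
Proof.
rewrite mxE !big_ord_recl big_ord0 addr0 addrA.
by congr (A i _ * B _ j + A i _ * B _ j + A i _ * B _ j); apply: val_inj.
Qed.

Lemma hbrE (u v : vec) : hbr u v = omega u v *: x3.
Proof. by []. Qed.

Ltac coords := rewrite /heis_frame /hbr /omega ?(mulmx3E, mxE) /=.

Lemma heis_frame_unit (u v : vec) : omega u v != 0 -> heis_frame u v \in unitmx.
Proof.
(* Q is the adjugate of the frame divided by omega u v; the determinant is (omega u v)^2. *)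
move=> om0.
pose Q := \matrix_(i, j)
  (if i == i0 then (if j == i0 then v i1 0 else if j == i1 then - v i0 0 else 0)
   else if i == i1 then (if j == i0 then - u i1 0 else if j == i1 then u i0 0 else 0)
   else if j == i0 then (u i1 0 * v i2 0 - u i2 0 * v i1 0) / omega u v
   else if j == i1 then (u i2 0 * v i0 0 - u i0 0 * v i2 0) / omega u v else 1).
suff /mulmx1_unit[] : ((omega u v)^-1 *: Q) *m heis_frame u v = 1%:M by [].
move: om0; rewrite /omega => om0.
by apply: mx3P => i; rewrite /Q; coords; case: (ord3P i) => -> /=; field; exact: om0.
Qed.

Lemma heis_frame_bracket (u v X Y : vec) :
  heis_frame u v *m hbr X Y = hbr (heis_frame u v *m X) (heis_frame u v *m Y).
Proof. by apply: vec3P; coords; ring. Qed.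

Lemma heis_frame_lie_aut (u v : vec) : omega u v != 0 -> lie_aut (heis_frame u v).
Proof. by move=> om0; split; [exact: heis_frame_unit | exact: heis_frame_bracket]. Qed.

Lemma lie_aut_inv (P : 'M[R]_3) : lie_aut P -> lie_aut (invmx P).
Proof.
case=> Pu PL; split=> [|X Y]; first by rewrite unitmx_inv.
by rewrite -{1}(mulKVmx Pu X) -{1}(mulKVmx Pu Y) -PL mulKmx.
Qed.

Lemma equiv_map_intertwine (J M P : 'M[R]_3) :
  lie_aut P -> J *m P = P *m M -> equiv_map J M.
Proof.
move=> PL JP; exists (invmx P); split; first exact: lie_aut_inv.
by case: PL => Pu _; rewrite invmxK -mulmxA JP mulKmx.
Qed.

Lemma equiv_map_trace (J M : 'M[R]_3) : equiv_map J M -> \tr M = \tr J.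
Proof. by case=> P [[Pu _] ->]; rewrite mxtrace_mulC mulmxA mulVmx // mul1mx. Qed.

Lemma mxtrace_Mc (c : R) : \tr (Mc c) = c.
Proof. by rewrite /mxtrace !big_ord_recl big_ord0 !mxE /= addr0 !add0r. Qed.

Lemma mxtrace_Mt (t : R) : \tr (Mt t) = t.
Proof. by rewrite /mxtrace !big_ord_recl big_ord0 !mxE /= !addr0. Qed.

Lemma mulmx_cols3 (J : 'M[R]_3) (u v w : vec) :
  J *m cols3 u v w = cols3 (J *m u) (J *m v) (J *m w).
Proof. by apply: mx3P => i; coords. Qed.

Lemma cols3_Mc (u v w : vec) (c : R) : cols3 u v w *m Mc c = cols3 v (- u) (c *: w).
Proof. by apply: mx3P => i; coords; ring. Qed.

Lemma cols3_Mt (u v w : vec) (t : R) : cols3 u v w *m Mt t = cols3 (t *: u) (- w) v.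
Proof. by apply: mx3P => i; coords; ring. Qed.

Lemma x3_neq0 : x3 != 0.
Proof.
by apply/eqP => /(congr1 (fun w : vec => w i2 0)); rewrite !mxE /= => /eqP; rewrite oner_eq0.
Qed.

Lemma vertical_x3 (Z : vec) : Z i0 0 = 0 -> Z i1 0 = 0 -> Z = Z i2 0 *: x3.
Proof. by move=> z0 z1; apply: vec3P; coords; rewrite ?z0 ?z1 ?mulr0 ?mulr1. Qed.

Lemma x3_mem_vertical (p : {vspace vec}) (Z : vec) :
  Z \in p -> Z != 0 -> Z i0 0 = 0 -> Z i1 0 = 0 -> x3 \in p.
Proof.
move=> Zp Z0 z0 z1; have ZE := vertical_x3 z0 z1.
have z2 : Z i2 0 != 0 by apply: contraNneq Z0 => z2; rewrite ZE z2 scale0r.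
by rewrite -[x3](scalerK z2) -ZE memvZ.
Qed.

Lemma x3_mem_of_omega0 (J : 'M[R]_3) (p : {vspace vec}) (X : vec) :
  X \in p -> X != 0 -> J *m X \in p -> J *m (J *m X) = - X ->
  omega X (J *m X) = 0 -> x3 \in p.
Proof.
move=> Xp X0 JXp JJX om0.
have [/andP[/eqP x0 /eqP x1] | ] := boolP ((X i0 0 == 0) && (X i1 0 == 0)).
  exact: x3_mem_vertical Xp X0 x0 x1.
(* For k = 1, 2 the x1, x2 coordinates of (JX)_k X - X_k JX vanish as omega X (JX) = 0. *)
have vertical_combo (k : 'I_3) : k != i2 -> X k 0 != 0 -> x3 \in p.
  move=> k2 Xk0; pose Z := (J *m X) k 0 *: X - X k 0 *: (J *m X).
  have Zp : Z \in p by rewrite memvB ?memvZ.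
  have Z0 : Z != 0.
    apply: contraNneq Xk0 => Z0.
    have ZE : (J *m X) k 0 *: X + (- X k 0) *: (J *m X) = 0 by rewrite scaleNr.
    have [_ /eqP] := cplx_indep JJX X0 ZE.
    by rewrite oppr_eq0.
  have [z0 z1] : Z i0 0 = 0 /\ Z i1 0 = 0.
    rewrite /Z; move: om0; move: (J *m X) => Y.
    by case: (ord3P k) k2 => -> // _; coords => om0; split; lra.
  exact: x3_mem_vertical Zp Z0 z0 z1.
by rewrite negb_and => /orP[]; apply: vertical_combo.
Qed.

Lemma abelian_x3_mem (J : 'M[R]_3) (p : {vspace vec}) :
  ext_CR J p -> abelian_sub p -> x3 \in p.
Proof.
case=> dim2 Jp JJ _ _ ab; set X := vpick p; have Xp : X \in p := memv_pick p.
have X0 : X != 0 by rewrite vpick0 -dimv_eq0 dim2.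
apply: (x3_mem_of_omega0 Xp X0 (Jp _ Xp) (JJ _ Xp)).
have := congr1 (fun w : vec => w i2 0) (ab _ _ Xp (Jp _ Xp)).
by rewrite hbrE !mxE /= mulr1.
Qed.

Lemma zero_torsion_x3 (J : 'M[R]_3) : zero_torsion J -> J *m x3 = J i2 i2 *: x3.
Proof.
(* The torsion of (x2, x3), resp. (x1, x3), has x1-, resp. x2-coordinate
   +-(J i0 i2)^2, resp. +-(J i1 i2)^2. *)
move=> T.
have J02 : J i0 i2 = 0.
  have := congr1 (fun w : vec => w i0 0) (T (vec3 0 1 0) x3); coords => h; nra.
have J12 : J i1 i2 = 0.
  have := congr1 (fun w : vec => w i1 0) (T (vec3 1 0 0) x3); coords => h; nra.
by apply: vec3P; coords; rewrite ?J02 ?J12; ring.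
Qed.

Lemma zero_torsion_x3_notin (J : 'M[R]_3) (p : {vspace vec}) :
  ext_CR J p -> zero_torsion J -> x3 \notin p.
Proof.
case=> _ _ JJ _ _ T; apply/negP => x3p.
by have /eqP := no_real_eigenvector (JJ _ x3p) (zero_torsion_x3 T); rewrite (negPf x3_neq0).
Qed.

Lemma heis_basis_decomp (u v W : vec) :
  omega u v != 0 -> exists a b c, W = a *: u + b *: v + c *: x3.
Proof.
move=> om0; pose a := omega W v / omega u v; pose b := omega u W / omega u v.
exists a, b, ((W - a *: u - b *: v) i2 0).
move: om0; rewrite /omega => om0.
by apply: vec3P; rewrite /a /b; coords; field.
Qed.

Lemma Mc_normal_form (J : 'M[R]_3) (p : {vspace vec}) :
  ext_CR J p -> zero_torsion J -> equiv_map J (Mc (J i2 i2)).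
Proof.
move=> CR T; have x3n := zero_torsion_x3_notin CR T.
case: CR => dim2 Jp JJ _ _; set X := vpick p; have Xp : X \in p := memv_pick p.
have X0 : X != 0 by rewrite vpick0 -dimv_eq0 dim2.
have om0 : omega X (J *m X) != 0.
  by apply: contraNneq x3n; apply: x3_mem_of_omega0 Xp X0 (Jp _ Xp) (JJ _ Xp).
apply: (equiv_map_intertwine (heis_frame_lie_aut om0)).
by rewrite /heis_frame mulmx_cols3 cols3_Mc JJ // -scalemxAr zero_torsion_x3 // !scalerA mulrC.
Qed.

Lemma Mt_normal_form (J : 'M[R]_3) (p : {vspace vec}) :
  ext_CR J p -> abelian_sub p -> exists t, equiv_map J (Mt t).
Proof.
move=> CR ab; have x3p := abelian_x3_mem CR ab.
case: CR => _ _ JJ _ _; move Jx3 : (J *m x3) => V.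
have JV : J *m V = - x3 by rewrite -Jx3 JJ.
have s0 : V i0 0 ^+ 2 + V i1 0 ^+ 2 != 0.
  apply/eqP => s0; have v0 : V i0 0 = 0 by nra. have v1 : V i1 0 = 0 by nra.
  have Jx3E : J *m x3 = V i2 0 *: x3 by rewrite Jx3; exact: vertical_x3.
  by move/eqP: x3_neq0; apply; exact: no_real_eigenvector (JJ _ x3p) Jx3E.
pose u := (V i0 0 ^+ 2 + V i1 0 ^+ 2)^-1 *: vec3 (V i1 0) (- V i0 0) 0.
have omu : omega u V = 1 by move: s0; rewrite /u; coords => s0; field.
have [t [b [c Ju]]] : exists t b c, J *m u = t *: u + b *: V + c *: x3.
  by apply: heis_basis_decomp; rewrite omu oner_eq0.
have [k1 [k2 Je]] := rotation_shift_eigen JV Jx3 Ju.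
set e := u + k1 *: V + k2 *: x3 in Je.
have ome : omega e V = 1 by rewrite -omu /e; coords; ring.
exists t; apply: (equiv_map_intertwine (P := heis_frame e V)).
  by apply: heis_frame_lie_aut; rewrite ome oner_eq0.
by rewrite /heis_frame ome scale1r mulmx_cols3 cols3_Mt Je JV Jx3.
Qed.

Lemma equiv_map_trace_unique (N : R -> 'M[R]_3) (J : 'M[R]_3) (c : R) :
  (forall c, \tr (N c) = c) -> equiv_map J (N c) -> exists! c, equiv_map J (N c).
Proof.
move=> trN Jc; exists c; split=> // c' /equiv_map_trace; rewrite trN => ->.
by rewrite -[LHS]trN; exact: equiv_map_trace.
Qed.

End Heisenberg.

Unset Implicit Arguments.

Theorem lemma4 (R : realType) :
  (forall J : 'M[R]_3,
     (exists p : {vspace vec R}, ext_CR J p /\ ~ abelian_sub p) ->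
     zero_torsion J ->
     exists! c : R, equiv_map J (Mc c))
  /\
  (forall J : 'M[R]_3,
     (exists p : {vspace vec R}, ext_CR J p /\ abelian_sub p) ->
     (exists! t : R, equiv_map J (Mt t)) /\ ~ zero_torsion J).
Proof.
split=> J [p [CR]].
  (* Non-abelianness of p is implied by zero torsion (abelian_x3_mem, zero_torsion_x3_notin). *)
  move=> _ T.
  exact: equiv_map_trace_unique (@mxtrace_Mc R) (Mc_normal_form CR T).
move=> ab; have [t Jt] := Mt_normal_form CR ab.
split; first exact: equiv_map_trace_unique (@mxtrace_Mt R) Jt.
by move/(zero_torsion_x3_notin CR)/negP; apply; exact: abelian_x3_mem CR ab.
Qed.
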